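(* For every finite strictly binary tree $T$ there exists an ultrametric space $(X,d)\in\mathfrak U$ such that the graphs $T$ and $\overline{T}_X$ are isomorphic.
   Context: $\operatorname{Sp}(X)=\{d(x,y):x\neq y\}$; $\mathfrak U$ is the class of finite ultrametric spaces $X$ with $|\operatorname{Sp}(X)|=|X|-1$. A strictly binary tree is a rooted tree whose root is adjacent to exactly two nodes and whose non-root non-leaf nodes are adjacent to exactly three nodes (a one-node tree counts as strictly binary). For a finite ultrametric space $X$ (with $X\cap\operatorname{Sp}(X)=\varnothing$), the representing tree $T_X$ is the labelled rooted tree defined recursively: for $X=\{x\}$ it is a single node labelled $x$; for $|X|\ge2$ the root is labelled $\operatorname{diam}X$ and has one child for each class $X_i$ of the equivalence relation $x\sim y\iff d(x,y)<\operatorname{diam}X$, that child being labelled $x$ if $X_i=\{x\}$ and otherwise labelled $\operatorname{diam}X_i$ and carrying the recursively constructed tree for $X_i$. $\overline{T}_X$ is the rooted tree obtained from $T_X$ by forgetting the labels. *)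

From HB Require Import structures.
From mathcomp Require Import all_boot all_order all_algebra.
From mathcomp Require Import reals.
Set Implicit Arguments. Unset Strict Implicit. Unset Printing Implicit Defensive.
Import Order.TTheory GRing.Theory Num.Theory.
Local Open Scope ring_scope.

Section Ultra.
Variables (R : realType) (X : finType) (d : X -> X -> R).

Definition is_ultrametric : Prop :=
  [/\ forall x y, 0 <= d x y,
      forall x y, d x y = 0 <-> x = y,
      forall x y, d x y = d y x &
      forall x y z, d x z <= Num.max (d x y) (d y z)].

Definition Sp : seq R :=
  undup [seq d p.1 p.2 | p <- enum [pred p : X * X | p.1 != p.2]].

Definition in_U : Prop :=
  [/\ is_ultrametric, (0 < #|X|)%N & size Sp = (#|X| - 1)%N].

Definition diam (B : {set X}) : R :=
  \big[Num.max/0]_(p in setX B B) d p.1 p.2.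

(* C is a child of B in the representing tree: |B| >= 2 and C is a class
   of the relation x ~ y <-> d(x,y) < diam B on B *)
Definition rt_child (B C : {set X}) : bool :=
  (1 < #|B|)%N && [exists x in B, C == [set y in B | d x y < diam B]].

(* nodes of T_X: X itself and, recursively, the classes of nodes *)
Definition rt_node (B : {set X}) : bool := connect rt_child [set: X] B.

Definition rt_edge (B C : {set X}) : bool := rt_child B C || rt_child C B.
End Ultra.

Section Trees.
Variables (V : finType) (e : rel V).

Definition simple_graph : Prop := symmetric e /\ irreflexive e.
Definition connected : Prop := forall x y, connect e x y.
Definition acyclic : Prop :=
  ~ exists s : seq V, [&& (2 < size s)%N, uniq s & cycle e s].
Definition is_tree : Prop := [/\ simple_graph, connected & acyclic].

Definition deg (v : V) : nat := #|[set w | e v w]|.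

(* rooted tree with root r; one-node tree counts as strictly binary *)
Definition strictly_binary_tree (r : V) : Prop :=
  is_tree /\
  (#|V| = 1%N \/
   (deg r = 2%N /\ forall v, v != r -> deg v = 1%N \/ deg v = 3%N)).
End Trees.

Definition iso_rep_tree (V : finType) (e : rel V) (R : realType) (X : finType)
    (d : X -> X -> R) : Prop :=
  exists f : V -> {set X},
    [/\ injective f,
        (forall B, rt_node d B <-> (exists v, f v = B)) &
        forall u v, e u v = rt_edge d (f u) (f v)].

(* Root the tree at r. Let X be its set of leaves, and put d(x, y) = h(lca x y) for x <> y,
   where h is injective and strictly decreasing from a vertex to its descendants. This d is
   an ultrametric. The diameter of the leaves below an internal vertex v is h v, and the open
   balls of radius h v split them into the leaf sets of the two children of v. So the
   representing tree of X is the original tree, with v corresponding to the leaves below v.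
   The nonzero distances are exactly the values of h on internal vertices, and a strictly
   binary tree has one internal vertex fewer than it has leaves. *)
From mathcomp Require Import all_boot all_order all_algebra.
From mathcomp Require Import reals.
From mathcomp Require Import zify.
Set Implicit Arguments. Unset Strict Implicit. Unset Printing Implicit Defensive.
Import Order.TTheory GRing.Theory Num.Theory.

Section RootedTree.
Variables (V : finType) (e : rel V) (r : V).
Hypotheses (e_sym : symmetric e) (e_irr : irreflexive e)
  (e_connected : connected e) (e_acyclic : acyclic e).

Definition path_from_root n v :=
  [exists s : n.-tuple V, path e r s && (last r s == v)].

Lemma path_from_rootP n v :
  reflect (exists s, [/\ size s = n, path e r s & last r s = v]) (path_from_root n v).
Proof.
apply: (iffP existsP) => [[s /andP[p /eqP l]] | [s [sz p l]]].
  by exists (val s); rewrite size_tuple.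
have sz' : size s == n by rewrite sz.
by exists (Tuple sz'); rewrite /= p l eqxx.
Qed.

Lemma exists_path_from_root v : exists n, path_from_root n v.
Proof.
have /connectP [s p l] := e_connected r v.
by exists (size s); apply/path_from_rootP; exists s.
Qed.

Definition depth v := ex_minn (exists_path_from_root v).

Lemma depth_min v s : path e r s -> last r s = v -> depth v <= size s.
Proof.
move=> p l; rewrite /depth; case: ex_minnP => m _; apply.
by apply/path_from_rootP; exists s.
Qed.

Lemma depth_path v : exists s, [/\ size s = depth v, path e r s & last r s = v].
Proof. by rewrite /depth; case: ex_minnP => m /path_from_rootP. Qed.

Lemma depth_root : depth r = 0.
Proof. by apply/eqP; rewrite -leqn0 (@depth_min r [::]). Qed.

Lemma depth0_root v : depth v = 0 -> v = r.
Proof.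
move=> d0; have [s [sz _ <-]] := depth_path v.
by move: sz; rewrite d0 => /size0nil ->.
Qed.

Lemma depth_gt_nonroot u v : depth u < depth v -> v != r.
Proof. by apply: contraTneq => ->; rewrite depth_root. Qed.

Lemma depth_edge u v : e u v -> depth v <= (depth u).+1.
Proof.
move=> huv; have [s [sz p l]] := depth_path u.
rewrite -sz -(size_rcons s v) depth_min ?last_rcons //.
by rewrite rcons_path p l.
Qed.

Lemma exists_parent v : v != r -> exists2 p, e p v & (depth p).+1 = depth v.
Proof.
move=> vr; have [s [sz p l]] := depth_path v.
case/lastP: s sz p l => [|s x] sz p l; first by rewrite -l eqxx in vr.
rewrite last_rcons in l; subst x; rewrite rcons_path in p; case/andP: p => p ee.
exists (last r s) => //; apply/eqP; rewrite eqn_leq depth_edge // andbT.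
by rewrite -sz size_rcons ltnS depth_min.
Qed.

Definition edge_removed u v :=
  [rel x y | e x y && ~~ (((x == u) && (y == v)) || ((x == v) && (y == u)))].

Lemma edge_is_bridge u v : e u v -> ~~ connect (edge_removed u v) v u.
Proof.
move=> huv; apply/negP => /connectP [s p l].
case: (shortenP p) l => s' p' u' _ l.
have sub : subrel (edge_removed u v) e by move=> x y /andP[].
apply: e_acyclic; exists (v :: s'); rewrite u' /=.
rewrite rcons_path (sub_path sub p') -l huv andbT.
case: s' p' u' l => [|a [|b s']] //=.
  by move=> _ _ vu; move: huv; rewrite vu e_irr.
by rewrite andbT => /andP[_] + _ au; rewrite -au !eqxx orbT.
Qed.

Definition shallow n := [rel x y | e x y && (depth x < n) && (depth y < n)].

Lemma connect_shallow_root n p : depth p < n -> connect (shallow n) r p.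
Proof.
have [m] := ubnP (depth p); elim: m p => // m IH p dp pn.
have [->|pr] := eqVneq p r; first exact: connect0.
have [q eqp dq] := exists_parent pr.
have qp : depth q < depth p by rewrite -dq.
apply: connect_trans (IH q _ _) (connect1 _).
- by rewrite -dq in dp.
- exact: ltn_trans pn.
- by rewrite /= eqp pn (ltn_trans qp pn).
Qed.

Lemma connect_shallow n p q : depth p < n -> depth q < n -> connect (shallow n) p q.
Proof.
move=> hp hq; apply: connect_trans (connect_shallow_root hq).
have sym : symmetric (shallow n) by move=> x y; rewrite /= e_sym andbAC.
by rewrite (sym_connect_sym sym) connect_shallow_root.
Qed.

Lemma shallow_sub_edge_removed u v : subrel (shallow (depth v)) (edge_removed u v).
Proof.
move=> x y /andP[/andP[hxy hx] hy]; rewrite /= hxy /=.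
by apply/negP => /orP[] /andP[/eqP ex /eqP ey]; [move: hy; rewrite ey | move: hx; rewrite ex];
  rewrite ltnn.
Qed.

Lemma edge_removed_outside u v x y : e x y ->
  (x \notin [:: u; v]) || (y \notin [:: u; v]) -> edge_removed u v x y.
Proof.
move=> xy; rewrite /= xy /=; apply: contraL.
by case/orP => /andP[/eqP-> /eqP->]; rewrite !inE !eqxx ?orbT.
Qed.

Lemma connect_edge_removed u v x y :
  depth x < depth v -> depth y < depth v -> connect (edge_removed u v) x y.
Proof.
move=> hx hy; apply: connect_sub (connect_shallow hx hy) => a b hab.
exact/connect1/shallow_sub_edge_removed.
Qed.

Lemma parent_unique p1 p2 v : e p1 v -> e p2 v ->
  depth p1 < depth v -> depth p2 < depth v -> p1 = p2.
Proof.
move=> h1 h2 d1 d2; apply/eqP/negPn/negP => n12.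
apply: (negP (edge_is_bridge h1)).
have v_p2 : edge_removed p1 v v p2.
  have p2_out : p2 \notin [:: p1; v].
    by rewrite !inE negb_or (eq_sym p2) n12; apply: contraTneq h2 => ->; rewrite e_irr.
  by rewrite edge_removed_outside 1?e_sym // p2_out orbT.
exact: connect_trans (connect1 (e := edge_removed p1 v) v_p2)
  (connect_edge_removed p1 d2 d1).
Qed.

Lemma edge_depth_neq u v : e u v -> depth u != depth v.
Proof.
move=> huv; apply/eqP => duv.
have ur : u != r.
  apply: contraTneq huv => ur; move: duv; rewrite ur depth_root => /esym/depth0_root->.
  by rewrite e_irr.
have vr : v != r.
  apply: contraTneq huv => vr; move: duv; rewrite vr depth_root => /depth0_root->.
  by rewrite e_irr.
have [p ep dp] := exists_parent vr; have [q eq dq] := exists_parent ur.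
apply: (negP (edge_is_bridge huv)).
have hp : depth p < depth v by rewrite -dp.
have hq : depth q < depth v by rewrite -duv -dq.
have v_p : edge_removed u v v p.
  have p_out : p \notin [:: u; v].
    rewrite !inE negb_or; apply/andP; split; apply/eqP => pw; move: hp; rewrite pw ?duv ltnn //.
  by rewrite edge_removed_outside 1?e_sym // p_out orbT.
have q_u : edge_removed u v q u.
  have q_out : q \notin [:: u; v].
    rewrite !inE negb_or; apply/andP; split; apply/eqP => qw; move: hq; rewrite qw ?duv ltnn //.
  by rewrite edge_removed_outside // q_out.
exact: connect_trans (connect1 (e := edge_removed u v) v_p)
  (connect_trans (connect_edge_removed u hp hq) (connect1 (e := edge_removed u v) q_u)).
Qed.

Definition parent v := odflt r [pick p | e p v && (depth p < depth v)].

Lemma parent_spec v : v != r -> e (parent v) v /\ (depth (parent v)).+1 = depth v.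
Proof.
move=> vr; have [q eq dq] := exists_parent vr.
rewrite /parent; case: pickP => [p /andP[ep dp]|none] /=.
  by rewrite (parent_unique ep eq dp) // -dq.
by move: (none q); rewrite eq -dq ltnSn.
Qed.

Lemma parent_root : parent r = r.
Proof. by rewrite /parent; case: pickP => // p /andP[_]; rewrite depth_root. Qed.

Lemma depth_parent v : depth (parent v) = (depth v).-1.
Proof.
have [->|vr] := eqVneq v r; first by rewrite parent_root depth_root.
by have [_ <-] := parent_spec vr.
Qed.

Lemma parent_eq p v : e p v -> depth p < depth v -> parent v = p.
Proof.
move=> ep dp; have [e1 d1] := parent_spec (depth_gt_nonroot dp).
by apply: parent_unique e1 ep _ dp; rewrite -d1.
Qed.

Definition is_child u w := (w != r) && (parent w == u).

Lemma edge_childE u v : e u v = is_child u v || is_child v u.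
Proof.
apply/idP/idP => [huv|].
  have evu : e v u by rewrite e_sym.
  have := edge_depth_neq huv; rewrite neq_ltn => /orP[] lt; rewrite /is_child.
    by rewrite (parent_eq huv lt) eqxx (depth_gt_nonroot lt).
  by rewrite (parent_eq evu lt) eqxx (depth_gt_nonroot lt) orbT.
by case/orP => /andP[nr /eqP <-]; have [pe _] := parent_spec nr; rewrite // e_sym.
Qed.

Lemma is_childP u c : is_child u c ->
  [/\ parent c = u, c != r & depth c = (depth u).+1].
Proof. by case/andP => cr /eqP pc; have [_ d] := parent_spec cr; rewrite -pc. Qed.

Definition ancestor u w := (depth u <= depth w) && (iter (depth w - depth u) parent w == u).

Lemma depth_iter_parent k w : depth (iter k parent w) = depth w - k.
Proof. by elim: k => [|k IH]; rewrite ?subn0 //= depth_parent IH subnS. Qed.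

Lemma ancestorP u w : ancestor u w -> iter (depth w - depth u) parent w = u.
Proof. by case/andP => _ /eqP. Qed.

Lemma ancestor_depth u w : ancestor u w -> depth u <= depth w.
Proof. by case/andP. Qed.

Lemma ancestor_refl u : ancestor u u.
Proof. by rewrite /ancestor leqnn subnn eqxx. Qed.

Lemma ancestor_root w : ancestor r w.
Proof.
rewrite /ancestor depth_root subn0 /=; apply/eqP/depth0_root.
by rewrite depth_iter_parent subnn.
Qed.

Lemma ancestor_parent w : ancestor (parent w) w.
Proof.
have [->|wr] := eqVneq w r; first by rewrite parent_root ancestor_refl.
by rewrite /ancestor; have [_ <-] := parent_spec wr; rewrite leqnSn subSn // subnn eqxx.
Qed.

Lemma ancestor_child u c : is_child u c -> ancestor u c.
Proof. by case/is_childP => <- _ _; apply: ancestor_parent. Qed.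

Lemma ancestor_of_ancestors u u' w :
  ancestor u w -> ancestor u' w -> depth u <= depth u' -> ancestor u u'.
Proof.
move=> h h' l; rewrite /ancestor l /=; have dw := ancestor_depth h'.
apply/eqP; rewrite -[X in iter _ _ X](ancestorP h') -iterD -[RHS](ancestorP h).
by congr iter; lia.
Qed.

Lemma ancestor_depth_inj u u' w :
  ancestor u w -> ancestor u' w -> depth u = depth u' -> u = u'.
Proof. by move=> h h' d; rewrite -(ancestorP h) -(ancestorP h') d. Qed.

Lemma ancestor_trans u v w : ancestor u v -> ancestor v w -> ancestor u w.
Proof.
move=> h1 h2; have l1 := ancestor_depth h1; have l2 := ancestor_depth h2.
rewrite /ancestor (leq_trans l1 l2) /=; apply/eqP; rewrite -[RHS](ancestorP h1).
have -> : depth w - depth u = (depth v - depth u) + (depth w - depth v) by lia.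
by rewrite iterD (ancestorP h2).
Qed.

Lemma ancestor_antisym u w : ancestor u w -> ancestor w u -> u = w.
Proof.
move=> h1 h2; apply: (ancestor_depth_inj h1 (ancestor_refl w)).
by apply/eqP; rewrite eqn_leq !ancestor_depth.
Qed.

Lemma ancestor_total u u' w : ancestor u w -> ancestor u' w -> ancestor u u' || ancestor u' u.
Proof.
move=> h h'; case: (leqP (depth u) (depth u')) => l.
  by rewrite (ancestor_of_ancestors h h' l).
by rewrite (ancestor_of_ancestors h' h (ltnW l)) orbT.
Qed.

Lemma ancestor_depth_lt u w : ancestor u w -> u != w -> depth u < depth w.
Proof.
move=> h; apply: contraNT; rewrite -leqNgt => l.
by rewrite (ancestor_depth_inj h (ancestor_refl w)) //; apply/eqP; rewrite eqn_leq l ancestor_depth.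
Qed.

(* The child of u on the way down to its proper descendant w. *)
Definition child_toward u w := iter (depth w - (depth u).+1) parent w.

Lemma child_towardP u w : ancestor u w -> u != w ->
  is_child u (child_toward u w) /\ ancestor (child_toward u w) w.
Proof.
move=> h n; have l := ancestor_depth_lt h n.
have dc : depth (child_toward u w) = (depth u).+1 by rewrite depth_iter_parent; lia.
split; last by rewrite /ancestor dc l /child_toward eqxx.
rewrite /is_child (depth_gt_nonroot (_ : depth u < _)) ?dc //=.
by rewrite -iterS subnSK // (ancestorP h).
Qed.

Lemma sibling_eq u c c' w : is_child u c -> is_child u c' ->
  ancestor c w -> ancestor c' w -> c = c'.
Proof.
move=> /is_childP[_ _ d] /is_childP[_ _ d'] a a'.
by apply: (ancestor_depth_inj a a'); rewrite d d'.
Qed.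

Definition children u := [set w | is_child u w].
Definition is_leaf v := children v == set0.

Lemma leaf_no_child x w : is_leaf x -> ~~ is_child x w.
Proof. by move=> /eqP leaf; apply/negP => xw; have := in_set0 w; rewrite -leaf inE xw. Qed.

Lemma leaf_ancestor x w : is_leaf x -> ancestor x w -> w = x.
Proof.
move=> l h; apply/eqP; rewrite eq_sym; apply/negPn/negP => n.
by have [c _] := child_towardP h n; rewrite (negbTE (leaf_no_child _ l)) in c.
Qed.

Lemma exists_leaf_below v : exists2 x, is_leaf x & ancestor v x.
Proof.
case: (arg_maxnP depth (ancestor_refl v)) => x hx hmax; exists x => //.
apply/eqP/setP => w; rewrite !inE; apply/negP => hw.
have [_ _ dw] := is_childP hw.
by have := hmax w (ancestor_trans hx (ancestor_child hw)); rewrite dw; lia.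
Qed.

Lemma deg_children v : deg e v = (#|children v| + (v != r))%N.
Proof.
rewrite /deg (_ : [set w | e v w] = children v :|: [set w | is_child w v]); last first.
  by apply/setP => w; rewrite !inE edge_childE.
rewrite cardsU.
have -> : children v :&: [set w | is_child w v] = set0.
  apply/setP => w; rewrite !inE; apply/negP => /andP[h1 h2].
  by have [_ _ d1] := is_childP h1; have [_ _ d2] := is_childP h2; lia.
rewrite cards0 subn0; congr addn.
have [->|vr] := eqVneq v r.
  by apply/eqP; rewrite cards_eq0; apply/eqP/setP => w; rewrite !inE /is_child eqxx.
rewrite /= -(cards1 (parent v)); apply: eq_card => w.
by rewrite !inE /is_child vr eq_sym.
Qed.

Lemma strictly_binary_children :
  (#|V| = 1%N \/ (deg e r = 2%N /\ forall v, v != r -> deg e v = 1%N \/ deg e v = 3%N)) ->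
  forall v, is_leaf v \/ #|children v| = 2%N.
Proof.
case=> [V1|[dr dv]] v.
  left; apply/eqP/setP => w; rewrite !inE /is_child; apply/negP => /andP[wr _].
  by have := max_card (mem [set w; r]); rewrite cards2 wr V1.
have [->|vr] := eqVneq v r; first by right; move: dr; rewrite deg_children eqxx addn0.
rewrite /is_leaf -cards_eq0.
by case: (dv v vr); rewrite deg_children vr addn1 => -[->]; [left | right].
Qed.

Section StrictlyBinary.
Hypothesis binary : forall v, is_leaf v \/ #|children v| = 2.

Lemma two_children v : ~~ is_leaf v ->
  exists c1 c2, [/\ c1 != c2, is_child v c1 & is_child v c2].
Proof.
case: (binary v) => [->//|/eqP/cards2P [x [y [nxy E]]]] _.
have : (x \in children v) && (y \in children v) by rewrite E !inE !eqxx orbT.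
by rewrite !inE => /andP[hx hy]; exists x, y.
Qed.

Lemma other_child u c : ~~ is_leaf u -> exists2 c', is_child u c' & c' != c.
Proof.
move=> nl; have [c1 [c2 [n12 h1 h2]]] := two_children nl.
by have [<-|] := eqVneq c1 c; [exists c2; rewrite // eq_sym | exists c1].
Qed.

Definition leaf := {x : V | is_leaf x}.
Definition leaves_below v : {set leaf} := [set x : leaf | ancestor v (val x)].

Lemma leaves_below_root : leaves_below r = setT.
Proof. by apply/setP => x; rewrite !inE ancestor_root. Qed.

Lemma exists_leaf_in v : exists x, x \in leaves_below v.
Proof.
have [x lx ax] := exists_leaf_below v.
by exists (exist _ x lx); rewrite inE.
Qed.

Lemma leaves_below_child u c x : is_child u c -> x \in leaves_below c -> x \in leaves_below u.
Proof. by rewrite !inE => /ancestor_child; apply: ancestor_trans. Qed.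

Lemma leaves_below_siblings u c c' x : is_child u c -> is_child u c' ->
  x \in leaves_below c -> x \in leaves_below c' -> c = c'.
Proof. by rewrite !inE; apply: sibling_eq. Qed.

Lemma leaves_below_siblings_neq u c c' x y : is_child u c -> is_child u c' -> c != c' ->
  x \in leaves_below c -> y \in leaves_below c' -> x != y.
Proof.
move=> h h' n hx hy; apply: contra n => /eqP xy; rewrite -xy in hy.
by rewrite (leaves_below_siblings h h' hx hy).
Qed.

Lemma leaves_below_leaf v x y : is_leaf v ->
  x \in leaves_below v -> y \in leaves_below v -> x = y.
Proof.
move=> l; rewrite !inE => /(leaf_ancestor l) hx /(leaf_ancestor l) hy.
by apply: val_inj; rewrite hx hy.
Qed.

Lemma leaves_below_gt1 v : ~~ is_leaf v -> 1 < #|leaves_below v|.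
Proof.
move=> nl; have [c1 [c2 [n12 h1 h2]]] := two_children nl.
have [x hx] := exists_leaf_in c1; have [y hy] := exists_leaf_in c2.
apply/card_gt1P; exists x, y.
by rewrite (leaves_below_child h1 hx) (leaves_below_child h2 hy) (leaves_below_siblings_neq h1 h2).
Qed.

Lemma leaf_not_internal (x : leaf) v : ~~ is_leaf v -> v != val x.
Proof. by move=> nl; apply: contraNneq nl => ->; apply: valP. Qed.

Lemma leaves_below_child_toward v x : ~~ is_leaf v -> x \in leaves_below v ->
  is_child v (child_toward v (val x)) /\ x \in leaves_below (child_toward v (val x)).
Proof.
by move=> nl; rewrite !inE => vx; apply: child_towardP vx (leaf_not_internal x nl).
Qed.

Lemma leaves_below_proper u w : ancestor u w -> u != w ->
  exists2 x, x \in leaves_below u & x \notin leaves_below w.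
Proof.
move=> h n; have [c ac] := child_towardP h n.
have nl : ~~ is_leaf u by apply: contraTN c => /leaf_no_child->.
have [c' hc' nc'] := other_child (child_toward u w) nl.
have [x hx] := exists_leaf_in c'.
exists x; first exact: leaves_below_child hc' hx.
apply: contra nc' => hw; apply/eqP; apply: leaves_below_siblings hc' c hx _.
by move: hw; rewrite !inE; apply: ancestor_trans.
Qed.

Lemma leaves_below_inj : injective leaves_below.
Proof.
have oriented u w : ancestor u w -> leaves_below u = leaves_below w -> u = w.
  move=> a E; apply/eqP/negPn/negP => n; have [y hy] := leaves_below_proper a n.
  by rewrite -E hy.
move=> u w E; have [x hx] := exists_leaf_in u.
have hw : x \in leaves_below w by rewrite -E.
move: hx hw; rewrite !inE => hx hw.
by case/orP: (ancestor_total hx hw) => a; [apply: oriented | apply/esym/oriented].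
Qed.

Definition lca x y := [arg max_(u > r | ancestor u x && ancestor u y) depth u].

Lemma lcaP x y : [/\ ancestor (lca x y) x, ancestor (lca x y) y &
  forall u, ancestor u x -> ancestor u y -> ancestor u (lca x y)].
Proof.
have r_common : ancestor r x && ancestor r y by rewrite !ancestor_root.
rewrite /lca; case: (@arg_maxnP _ r (fun u => ancestor u x && ancestor u y) depth r_common).
move=> m /andP[mx my] max_m.
split => // u ux uy.
by apply: (ancestor_of_ancestors ux mx); apply: max_m; rewrite ux uy.
Qed.

Lemma lca_unique x y m : ancestor m x -> ancestor m y ->
  (forall u, ancestor u x -> ancestor u y -> ancestor u m) -> lca x y = m.
Proof.
move=> mx my m_max; have [lx ly l_max] := lcaP x y.
by apply: ancestor_antisym; [apply: m_max | apply: l_max].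
Qed.

Lemma lcaC x y : lca x y = lca y x.
Proof. by have [lx ly l_max] := lcaP y x; apply: lca_unique => // u ux uy; apply: l_max. Qed.

Lemma lca_siblings u a b c c' : is_child u c -> is_child u c' -> c != c' ->
  ancestor c a -> ancestor c' b -> lca a b = u.
Proof.
move=> h h' n ca cb; have ua := ancestor_trans (ancestor_child h) ca.
have ub := ancestor_trans (ancestor_child h') cb.
apply: lca_unique => // w wa wb.
case/orP: (ancestor_total wa ua) => // uw.
have [->|nw] := eqVneq u w; first exact: ancestor_refl.
have [cw aw] := child_towardP uw nw.
have e1 := sibling_eq cw h (ancestor_trans aw wa) ca.
have e2 := sibling_eq cw h' (ancestor_trans aw wb) cb.
by rewrite -e1 -e2 eqxx in n.
Qed.

Lemma lca_internal (x y : leaf) : x != y -> ~~ is_leaf (lca (val x) (val y)).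
Proof.
move=> n; have [ax ay _] := lcaP (val x) (val y); apply/negP => l.
have xy : val x = val y := etrans (leaf_ancestor l ax) (esym (leaf_ancestor l ay)).
by rewrite (val_inj xy) eqxx in n.
Qed.

(* Every vertex other than the root has exactly one parent, and each internal vertex two
   children: |V| - 1 = 2 #internal, and |V| = #leaves + #internal. *)
Lemma card_internal : #|[pred v | ~~ is_leaf v]| = (#|{: leaf}| - 1)%N.
Proof.
have nonroots : #|predC1 r| = (\sum_v #|children v|)%N.
  rewrite -sum1_card (partition_big parent predT) //=; apply: eq_bigr => v _.
  by rewrite sum1dep_card; apply: eq_card => w; rewrite !inE.
have sum_children : (\sum_v #|children v|)%N = (#|[pred v | ~~ is_leaf v]| * 2)%N.
  rewrite -sum_nat_const [RHS]big_mkcond /=; apply: eq_bigr => v _; rewrite inE.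
  case: (binary v) => [l|c2]; last by rewrite /is_leaf -cards_eq0 c2.
  by rewrite l; apply/eqP; rewrite cards_eq0.
have split_V : #|V| = (#|[pred v | is_leaf v]| + #|[pred v | ~~ is_leaf v]|)%N.
  by rewrite -(cardC [pred v | is_leaf v]); congr addn; apply: eq_card => v; rewrite !inE.
rewrite card_sig; move: nonroots sum_children split_V; rewrite cardC1 -subn1.
by move: (#|V|) (\sum_v _)%N (#|[pred v | is_leaf v]|) (#|[pred v | ~~ is_leaf v]|); lia.
Qed.

Section LeafMetric.
Variable R : realType.
Local Open Scope ring_scope.

Definition descendants u := [set w | ancestor u w].

(* The [enum_rank] term makes [height] injective. *)
Definition height u : R := (#|descendants u| * #|V| + enum_rank u)%N%:R.

Lemma height_lt u w : ancestor u w -> u != w -> height w < height u.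
Proof.
move=> a n; rewrite ltr_nat.
have lt_desc : (#|descendants w| < #|descendants u|)%N.
  apply: proper_card; apply/properP; split.
    by apply/subsetP => z; rewrite !inE; apply: ancestor_trans.
  exists u; rewrite !inE ?ancestor_refl //.
  by apply: contra n => wu; rewrite (ancestor_antisym a wu).
have : (enum_rank w < #|V|)%N by [].
move: (nat_of_ord (enum_rank w)) (nat_of_ord (enum_rank u)) lt_desc => i j; nia.
Qed.

Lemma height_le u w : ancestor u w -> height w <= height u.
Proof. by have [->|n] := eqVneq u w => [_|/height_lt/(_ n)/ltW]. Qed.

Lemma height_gt0 u : 0 < height u.
Proof.
rewrite ltr0n; have : (0 < #|descendants u|)%N.
  by apply/card_gt0P; exists u; rewrite inE ancestor_refl.
have : (0 < #|V|)%N by apply/card_gt0P; exists u.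
nia.
Qed.

Lemma height_inj : injective height.
Proof.
move=> u w /eqP; rewrite eqr_nat => /eqP/(congr1 (modn^~ #|V|)).
rewrite !modnMDl !modn_small ?ltn_ord // => /val_inj.
exact: enum_rank_inj.
Qed.

Definition leaf_dist (x y : leaf) : R := if x == y then 0 else height (lca (val x) (val y)).

Lemma leaf_distE x y : x != y -> leaf_dist x y = height (lca (val x) (val y)).
Proof. by rewrite /leaf_dist => /negbTE->. Qed.

Lemma leaf_dist_ge0 x y : 0 <= leaf_dist x y.
Proof. by rewrite /leaf_dist; case: eqP => // _; apply/ltW/height_gt0. Qed.

Lemma leaf_dist_le_lca x y u :
  ancestor u (val x) -> ancestor u (val y) -> leaf_dist x y <= height u.
Proof.
move=> ux uy; rewrite /leaf_dist; case: eqP => _; first exact/ltW/height_gt0.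
by have [_ _ lca_max] := lcaP (val x) (val y); apply/height_le/lca_max.
Qed.

Lemma leaf_dist_ultrametric : is_ultrametric leaf_dist.
Proof.
split.
- exact: leaf_dist_ge0.
- move=> x y; rewrite /leaf_dist; case: eqP => // n; split => // h0.
  by have := height_gt0 (lca (val x) (val y)); rewrite h0 ltxx.
- by move=> x y; rewrite /leaf_dist eq_sym lcaC.
- move=> x y z; rewrite le_max.
  have [<-|nxy] := eqVneq x y; first by rewrite lexx orbT.
  have [<-|nyz] := eqVneq y z; first by rewrite lexx.
  rewrite (leaf_distE nxy) (leaf_distE nyz).
  have [a1 a2 _] := lcaP (val x) (val y); have [b1 b2 _] := lcaP (val y) (val z).
  case/orP: (ancestor_total a2 b1) => ab.
    by rewrite (leaf_dist_le_lca a1 (ancestor_trans ab b2)).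
  by rewrite (leaf_dist_le_lca (ancestor_trans ab a1) b2) orbT.
Qed.

Lemma leaf_dist_lt_child v c x y : is_child v c ->
  x \in leaves_below c -> y \in leaves_below c -> leaf_dist x y < height v.
Proof.
move=> vc; rewrite !inE => cx cy; apply: le_lt_trans (leaf_dist_le_lca cx cy) _.
have [_ _ dc] := is_childP vc; apply: height_lt (ancestor_child vc) _.
by apply/eqP => v_c; move: dc; rewrite v_c; lia.
Qed.

Lemma leaf_dist_siblings v c1 c2 x y : is_child v c1 -> is_child v c2 -> c1 != c2 ->
  x \in leaves_below c1 -> y \in leaves_below c2 -> leaf_dist x y = height v.
Proof.
move=> h1 h2 n hx hy; rewrite leaf_distE ?(leaves_below_siblings_neq h1 h2 n hx hy) //.
by move: hx hy; rewrite !inE => hx hy; rewrite (lca_siblings h1 h2 n hx hy).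
Qed.

Lemma diam_leaves_below v : ~~ is_leaf v -> diam leaf_dist (leaves_below v) = height v.
Proof.
move=> nl; apply/le_anti/andP; split.
  apply/bigmax_leP; split=> [|[x y]]; first exact/ltW/height_gt0.
  by rewrite inE /= !inE => /andP[vx vy]; apply: leaf_dist_le_lca.
have [c1 [c2 [n12 h1 h2]]] := two_children nl.
have [x hx] := exists_leaf_in c1; have [y hy] := exists_leaf_in c2.
have xy_below : (x, y) \in setX (leaves_below v) (leaves_below v).
  by rewrite inE /= (leaves_below_child h1 hx) (leaves_below_child h2 hy).
rewrite -(leaf_dist_siblings h1 h2 n12 hx hy).
exact: (le_bigmax_cond _ (fun p => leaf_dist p.1 p.2) xy_below).
Qed.

Lemma ball_leaves_below v x : ~~ is_leaf v -> x \in leaves_below v ->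
  [set y in leaves_below v | leaf_dist x y < diam leaf_dist (leaves_below v)] =
  leaves_below (child_toward v (val x)).
Proof.
move=> nl vx; set c := child_toward v (val x).
have [cx x_c] := leaves_below_child_toward nl vx.
rewrite diam_leaves_below //; apply/setP => y; rewrite in_set.
have [y_c|ny_c] := boolP (y \in leaves_below c).
  by rewrite (leaves_below_child cx y_c) (leaf_dist_lt_child cx x_c y_c).
apply/negbTE/negP => /andP[vy].
have [cy y_cy] := leaves_below_child_toward nl vy.
have n_c : c != child_toward v (val y) by apply: contraNneq ny_c => ->.
by rewrite (leaf_dist_siblings cx cy n_c x_c y_cy) ltxx.
Qed.

Lemma rt_child_leaves_belowP u C : rt_child leaf_dist (leaves_below u) C ->
  exists2 w, C = leaves_below w & is_child u w.
Proof.
case/andP => gt1 /existsP [x /andP[ux /eqP ->]].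
have nl : ~~ is_leaf u.
  apply/negP => l; move/card_gt1P: gt1 => [a [b [ua ub]]].
  by rewrite (leaves_below_leaf l ua ub) eqxx.
have [cx _] := leaves_below_child_toward nl ux.
by exists (child_toward u (val x)); rewrite ?ball_leaves_below.
Qed.

Lemma rt_child_leaves_below u w :
  rt_child leaf_dist (leaves_below u) (leaves_below w) = is_child u w.
Proof.
apply/idP/idP => [/rt_child_leaves_belowP [w' /leaves_below_inj -> //]|uw].
have nl : ~~ is_leaf u by apply: contraTN uw => /leaf_no_child.
have [x w_x] := exists_leaf_in w; have u_x := leaves_below_child uw w_x.
rewrite /rt_child leaves_below_gt1 //=; apply/existsP; exists x.
rewrite u_x ball_leaves_below //; have [cx x_c] := leaves_below_child_toward nl u_x.
by rewrite /= (leaves_below_siblings uw cx w_x x_c).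
Qed.

Lemma rt_node_leaves_below B :
  rt_node leaf_dist B <-> exists v, leaves_below v = B.
Proof.
split=> [|[v <-]].
  case/connectP => p; rewrite -leaves_below_root.
  elim: p r => [|C p IH] u /=; first by move=> _ ->; exists u.
  by case/andP => /rt_child_leaves_belowP [w -> _]; apply: IH.
have [n] := ubnP (depth v); elim: n v => // n IH v dv.
have [->|vr] := eqVneq v r; first by rewrite /rt_node leaves_below_root connect0.
have [_ d] := parent_spec vr.
apply: connect_trans (IH (parent v) _) (connect1 _); first by rewrite -d in dv.
by rewrite rt_child_leaves_below /is_child vr eqxx.
Qed.

Lemma rt_edge_leaves_below u w :
  e u w = rt_edge leaf_dist (leaves_below u) (leaves_below w).
Proof. by rewrite /rt_edge !rt_child_leaves_below edge_childE. Qed.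

Lemma Sp_leaf_dist :
  perm_eq (Sp leaf_dist) [seq height v | v <- enum [pred v | ~~ is_leaf v]].
Proof.
apply: uniq_perm; first exact: undup_uniq.
  by rewrite (map_inj_uniq height_inj) enum_uniq.
move=> z; rewrite mem_undup; apply/mapP/mapP => [[[x y]]|[v]].
  rewrite mem_enum /= => nxy ->.
  by exists (lca (val x) (val y)); rewrite ?mem_enum ?inE ?lca_internal ?leaf_distE.
rewrite mem_enum inE => nl ->.
have [c1 [c2 [n12 h1 h2]]] := two_children nl.
have [x hx] := exists_leaf_in c1; have [y hy] := exists_leaf_in c2.
exists (x, y); last by rewrite /= (leaf_dist_siblings h1 h2 n12 hx hy).
by rewrite mem_enum inE /= (leaves_below_siblings_neq h1 h2 n12 hx hy).
Qed.

Lemma leaf_dist_in_U : in_U leaf_dist.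
Proof.
split; first exact: leaf_dist_ultrametric.
  by have [x _] := exists_leaf_in r; apply/card_gt0P; exists x.
by rewrite (perm_size Sp_leaf_dist) size_map -cardE card_internal.
Qed.

Lemma iso_leaves_below : iso_rep_tree e leaf_dist.
Proof.
exists leaves_below; split; first exact: leaves_below_inj.
  by move=> B; rewrite rt_node_leaves_below.
exact: rt_edge_leaves_below.
Qed.

End LeafMetric.

End StrictlyBinary.

End RootedTree.

Theorem lemma18 (R : realType) (V : finType) (e : rel V) (r : V) :
  strictly_binary_tree e r ->
  exists (X : finType) (d : X -> X -> R), in_U d /\ iso_rep_tree e d.
Proof.
case=> [[[e_sym e_irr] e_connected e_acyclic] degrees].
have binary := strictly_binary_children e_sym e_irr e_connected e_acyclic degrees.
exists (leaf r e_connected), (@leaf_dist _ e r e_connected R).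
exact: conj (leaf_dist_in_U e_sym e_irr e_acyclic binary R)
  (iso_leaves_below e_sym e_irr e_acyclic binary R).
Qed.
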